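(* Consider the hard core model with a fixed vertex activity $\lambda>0$, let $\phi(x)=\sinh^{-1}(\sqrt x)$, so $\Phi(x)=\phi'(x)=\frac{1}{2\sqrt{x(1+x)}}$, and let $d$ be a positive integer. Let $\xi(d)=\sup_{x\ge0}\Xi(d,x)$ where $\Xi(d,x)=d\left(\frac{\Phi(f_{d,\lambda}(x))f_{d,\lambda}(x)}{(1+x)\Phi(x)}\right)^2$ and $f_{d,\lambda}(x)=\lambda/(1+x)^d$. Then the equation $d\,x=1+f_{d,\lambda}(x)$ has a unique positive solution $\tilde x_\lambda(d)$, and $\xi(d)=\Xi(d,\tilde x_\lambda(d))$. *)

From HB Require Import structures.
From mathcomp Require Import all_boot all_order all_algebra.
From mathcomp Require Import all_classical all_reals ereal.
Set Implicit Arguments. Unset Strict Implicit. Unset Printing Implicit Defensive.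
Import Order.TTheory GRing.Theory Num.Theory.
Local Open Scope ring_scope.

Definition hc_f {R : realType} (lambda : R) (d : nat) (x : R) : R :=
  lambda / (1 + x) ^+ d.

(* Phi(x) = phi'(x) = 1 / (2 sqrt(x(1+x))), phi = arsinh(sqrt x).
   (At x = 0 MathComp's convention 0^-1 = 0 applies.) *)
Definition hc_Phi {R : realType} (x : R) : R :=
  1 / (2 * Num.sqrt (x * (1 + x))).

Definition hc_Xi {R : realType} (lambda : R) (d : nat) (x : R) : R :=
  d%:R * (hc_Phi (hc_f lambda d x) * hc_f lambda d x / ((1 + x) * hc_Phi x)) ^+ 2.

(* xi(d) = sup_{x >= 0} Xi(d,x), as an extended real (so unboundedness is not hidden). *)
Definition hc_xi {R : realType} (lambda : R) (d : nat) : \bar R :=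
  ereal_sup [set (hc_Xi lambda d x)%:E | x in [set x : R | 0 <= x]%classic].

From HB Require Import structures.
From mathcomp Require Import all_boot all_order all_algebra.
From mathcomp Require Import all_classical all_reals ereal.
From mathcomp Require Import topology normedtype derive.
From mathcomp Require Import ring lra.
Import numFieldNormedType.Exports.
Import Order.TTheory GRing.Theory Num.Theory.
Set Implicit Arguments. Unset Strict Implicit. Unset Printing Implicit Defensive.
Local Open Scope ring_scope.

(* For x >= 0 the Phi-factors cancel and Xi(d, x) = d x lambda / ((1 + x)((1 + x)^d + lambda)).
   Writing P = (1 + x)^d and Q = (1 + c)^d, the fixed point c is characterised by
   lambda = Q (d c - 1), and the tangent-line bound for t |-> t^d at 1 + c gives
   Q (1 + c + d (x - c)) <= P (1 + c).  Clearing denominators, Xi(d, c) - Xi(d, x)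
   becomes a positive multiple of c (1 + x)(P (1 + c) - Q (1 + c + d (x - c)))
   + d c Q (x - c)^2, so c maximises Xi(d, .).  Existence of c follows from the
   intermediate value theorem, uniqueness from the monotonicity of d x - f(x). *)

Lemma expr_tangent_le (R : realFieldType) (n : nat) (a b : R) :
  0 <= a -> 0 <= b -> b ^+ n * (b + n%:R * (a - b)) <= a ^+ n * b.
Proof.
move=> a_ge0 b_ge0; elim: n => [|n IHn]; first by rewrite !expr0 mul0r addr0 !mul1r.
have IHa : a * (b ^+ n * (b + n%:R * (a - b))) <= a * (a ^+ n * b) by exact: ler_wpM2l.
have sq_ge0 : 0 <= b ^+ n * (n%:R * (a - b) ^+ 2).
  by rewrite mulr_ge0 ?exprn_ge0 // mulr_ge0 ?sqr_ge0.
have gap : a * (b ^+ n * (b + n%:R * (a - b))) - b ^+ n.+1 * (b + n.+1%:R * (a - b))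
           = b ^+ n * (n%:R * (a - b) ^+ 2) by rewrite -natr1 exprS; ring.
by rewrite [a ^+ _]exprS -mulrA; lra.
Qed.

Lemma ereal_sup_attained (R : realType) (T : Type) (A : set T) (f : T -> R) (c : T) :
  A c -> (forall x, A x -> f x <= f c) -> ereal_sup [set (f x)%:E | x in A] = (f c)%:E.
Proof.
move=> Ac f_le; apply/eqP; rewrite eq_le; apply/andP; split.
  by apply: ge_ereal_sup => _ [x Ax <-]; rewrite lee_fin f_le.
by apply: ereal_sup_ubound; exists c.
Qed.

Section HardCore.
Variables (R : realType) (lambda : R) (d : nat).

Let f := hc_f lambda d.

Lemma hc_f_gt0 (x : R) : 0 < lambda -> 0 <= x -> 0 < f x.
Proof. by move=> lambda_gt0 x_ge0; rewrite divr_gt0 // exprn_gt0 // ltr_wpDr. Qed.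

Lemma hc_f_le (x y : R) : 0 < lambda -> 0 <= x -> x <= y -> f y <= f x.
Proof.
move=> lambda_gt0 x_ge0 le_xy; rewrite /f /hc_f ler_wpM2l ?(ltW lambda_gt0) //.
rewrite lef_pV2 ?posrE ?exprn_gt0 ?lerXn2r ?nnegrE //; lra.
Qed.

Lemma hc_fixed_pointP (x : R) : 0 <= x ->
  (d%:R * x = 1 + f x) <-> ((1 + x) ^+ d * (d%:R * x - 1) = lambda).
Proof.
move=> x_ge0; have P_neq0 : (1 + x) ^+ d != 0 by rewrite expf_neq0 // gt_eqF //; lra.
rewrite /f /hc_f; split => [-> | <-]; last by rewrite mulrAC divff // mul1r; lra.
by rewrite addrAC subrr add0r mulrC divfK.
Qed.

Lemma hc_fixed_point_exists :
  0 < lambda -> (0 < d)%N -> exists2 c : R, 0 < c & d%:R * c = 1 + f c.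
Proof.
move=> lambda_gt0 d_gt0; have dR_gt0 : 0 < d%:R :> R by rewrite ltr0n.
pose p : {poly R} := ('X + 1) ^+ d * (d%:R *: 'X - 1) - lambda%:P.
have pE x : p.[x] = (1 + x) ^+ d * (d%:R * x - 1) - lambda.
  by rewrite /p !hornerE (addrC x).
pose b := (1 + lambda) / d%:R.
have db : d%:R * b = 1 + lambda by rewrite /b mulrC divfK ?gt_eqF.
have b_ge0 : 0 <= b by apply: divr_ge0; lra.
have p0_lt0 : p.[0] < 0 by rewrite pE addr0 expr1n mulr0; lra.
have pb_ge0 : 0 <= p.[b].
  have : 1 <= (1 + b) ^+ d by rewrite exprn_ege1 //; lra.
  rewrite pE db; nra.
have [c c_in pc0] : exists2 c, c \in `[0, b] & p.[c] = 0.
  apply: IVT => //; first exact/continuous_subspaceT/continuous_horner.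
  by rewrite ge_min le_max; apply/andP; split; apply/orP; [left | right]; lra.
move: c_in; rewrite in_itv /= => /andP[c_ge0 _].
have c_gt0 : 0 < c.
  by rewrite lt_neqAle c_ge0 andbT; apply/eqP => c0; move: pc0; rewrite -c0; lra.
by exists c => //; apply/hc_fixed_pointP => //; move: pc0; rewrite pE; lra.
Qed.

Lemma hc_fixed_point_unique (x y : R) :
  0 < lambda -> (0 < d)%N -> 0 <= x -> 0 <= y ->
  d%:R * x = 1 + f x -> d%:R * y = 1 + f y -> x = y.
Proof.
move=> lambda_gt0 d_gt0 x_ge0 y_ge0 fix_x fix_y.
have dR_gt0 : 0 < d%:R :> R by rewrite ltr0n.
case: (ltgtP x y) => // [lt_xy | lt_yx].
  have : d%:R * x < d%:R * y by rewrite ltr_pM2l.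
  by have := hc_f_le lambda_gt0 x_ge0 (ltW lt_xy); lra.
have : d%:R * y < d%:R * x by rewrite ltr_pM2l.
by have := hc_f_le lambda_gt0 y_ge0 (ltW lt_yx); lra.
Qed.

Lemma hc_XiE (x : R) : 0 < lambda -> 0 <= x ->
  hc_Xi lambda d x = d%:R * (x * lambda / ((1 + x) * ((1 + x) ^+ d + lambda))).
Proof.
move=> lambda_gt0; rewrite le_eqVlt => /predU1P[<- | x_gt0].
  (* Both sides vanish, the left one because hc_Phi 0 = 1 / 0 = 0. *)
  by rewrite /hc_Xi /hc_Phi !(mul0r, mulr0, sqrtr0, invr0, expr0n).
have fx_gt0 := hc_f_gt0 lambda_gt0 (ltW x_gt0).
rewrite /hc_Xi -/f /hc_Phi; congr (_ * _).
set s := Num.sqrt (f x * (1 + f x)); set t := Num.sqrt (x * (1 + x)).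
have s_gt0 : 0 < s by rewrite sqrtr_gt0 mulr_gt0 //; lra.
have t_gt0 : 0 < t by rewrite sqrtr_gt0 mulr_gt0 //; lra.
have s2 : s ^+ 2 = f x * (1 + f x) by rewrite sqr_sqrtr // mulr_ge0 //; lra.
have t2 : t ^+ 2 = x * (1 + x) by rewrite sqr_sqrtr // mulr_ge0 //; lra.
have P_gt0 : 0 < (1 + x) ^+ d by rewrite exprn_gt0 //; lra.
have -> : 1 / (2 * s) * f x / ((1 + x) * (1 / (2 * t))) = f x * t / (s * (1 + x)).
  by field; rewrite !gt_eqF //; lra.
rewrite expr_div_n !exprMn s2 t2 /f /hc_f; clearbody s t.
by field; rewrite !gt_eqF //; lra.
Qed.

Lemma hc_Xi_le_fixed_point (c x : R) :
  0 < lambda -> 0 < c -> d%:R * c = 1 + f c -> 0 <= x ->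
  hc_Xi lambda d x <= hc_Xi lambda d c.
Proof.
move=> lambda_gt0 c_gt0 /(hc_fixed_pointP (ltW c_gt0)) root_c x_ge0.
rewrite (hc_XiE lambda_gt0 x_ge0) (hc_XiE lambda_gt0 (ltW c_gt0)) ler_wpM2l ?ler0n //.
set P := (1 + x) ^+ d; set Q := (1 + c) ^+ d.
have P_gt0 : 0 < P by rewrite exprn_gt0 //; lra.
have Q_gt0 : 0 < Q by rewrite exprn_gt0 //; lra.
have tangent : Q * (1 + c + d%:R * (x - c)) <= P * (1 + c).
  have := expr_tangent_le d (_ : 0 <= 1 + x) (_ : 0 <= 1 + c).
  by rewrite -/P -/Q (_ : 1 + x - (1 + c) = x - c); [apply; lra | ring].
set B := c * (1 + x) * (P + lambda) - x * (1 + c) * (Q + lambda).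
have B_ge0 : 0 <= B.
  have B_id : (1 + c) * B = c * (1 + x) * (P * (1 + c) - Q * (1 + c + d%:R * (x - c)))
                            + d%:R * Q * c * (c - x) ^+ 2.
    by rewrite /B /Q -root_c; ring.
  have : 0 <= (1 + c) * B.
    rewrite B_id addr_ge0 //.
      by rewrite mulr_ge0 ?subr_ge0 // mulr_ge0 //; lra.
    by rewrite mulr_ge0 ?sqr_ge0 // !mulr_ge0 ?ler0n //; lra.
  by rewrite pmulr_rge0 //; lra.
rewrite ler_pdivrMr ?mulr_gt0 //; try lra.
rewrite mulrAC ler_pdivlMr ?mulr_gt0 //; try lra.
rewrite -subr_ge0.
have -> : c * lambda * ((1 + x) * (P + lambda)) - x * lambda * ((1 + c) * (Q + lambda))
          = lambda * B by rewrite /B; ring.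
by rewrite mulr_ge0 // ltW.
Qed.

End HardCore.

Theorem lemma4p2 (R : realType) (lambda : R) (d : nat)
  (hlambda : 0 < lambda) (hd : (0 < d)%N) :
  exists xt : R,
    (0 < xt /\ d%:R * xt = 1 + hc_f lambda d xt) /\
    (forall y : R, 0 < y -> d%:R * y = 1 + hc_f lambda d y -> y = xt) /\
    hc_xi lambda d = (hc_Xi lambda d xt)%:E.
Proof.
have [c c_gt0 fix_c] := hc_fixed_point_exists hlambda hd.
exists c; split; first by [].
split=> [y y_gt0 fix_y | ].
  exact: hc_fixed_point_unique hlambda hd (ltW y_gt0) (ltW c_gt0) fix_y fix_c.
apply: ereal_sup_attained => [|x x_ge0]; first exact: ltW.
exact: hc_Xi_le_fixed_point hlambda c_gt0 fix_c x_ge0.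
Qed.
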